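(* Let $\gamma(z)=\sum_{n=1}^{\infty} z^{n-1}\left(\frac{1}{n}-\log\frac{n+1}{n}\right)$ for $|z|\le 1$, and for $k=2,3,\ldots$ and $|z|\le1$ let $\mathrm{Li}_k(z)=\sum_{n=1}^{\infty} \frac{z^n}{n^k}$. If $|z|\le 1$, then $$z\gamma(z)=\sum_{k=2}^{\infty}(-1)^k\frac{\mathrm{Li}_k(z)}{k}.$$ If in addition $z\neq 1$, then $$z^2\gamma(z)=z+(1-z)\log(1-z)-\sum_{k=2}^{\infty}\frac{\mathrm{Li}_k(z)-z}{k}.$$
   Context: For $z\neq 0$, $\log z=\ln|z|+i\,\mathrm{Arg}\,z$ with $-\pi<\mathrm{Arg}\,z\le\pi$. The series defining $\gamma(z)$ converges for $|z|\le 1$; $\gamma(z)$ is called the generalized-Euler-constant function. *)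

From Stdlib Require Import Reals.
From Coquelicot Require Import Coquelicot.
Open Scope R_scope.

(* Sum of a complex series, taken componentwise (= the limit of partial sums
   whenever the series converges in C). *)
Definition CSeries (a : nat -> C) : C :=
  (Series (fun n => Re (a n)), Series (fun n => Im (a n))).

(* Principal argument Arg z in (-PI, PI] (the usual atan2); Arg 0 := 0. *)
Definition Arg (z : C) : R :=
  let x := Re z in let y := Im z in
  if Rlt_dec 0 x then atan (y / x)
  else if Rlt_dec x 0 then
    (if Rle_dec 0 y then atan (y / x) + PI else atan (y / x) - PI)
  else (if Rlt_dec 0 y then PI / 2
        else if Rlt_dec y 0 then - (PI / 2) else 0).

Definition Clog (z : C) : C := (ln (Cmod z), Arg z).

(* gamma(z) = sum_{n>=1} z^(n-1) (1/n - log((n+1)/n)); index shifted n = m+1. *)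
Definition gamma_term (z : C) (m : nat) : C :=
  Cmult (pow_n z m)
    (Cminus (RtoC (/ INR (S m))) (Clog (RtoC (INR (S (S m)) / INR (S m))))).
Definition gammaC (z : C) : C := CSeries (gamma_term z).

(* Li_k(z) = sum_{n>=1} z^n / n^k; index shifted n = m+1. *)
Definition Li (k : nat) (z : C) : C :=
  CSeries (fun m : nat => Cdiv (pow_n z (S m)) (RtoC (INR (S m) ^ k))).

From Stdlib Require Import Reals Lra Lia.
From Coquelicot Require Import Coquelicot.
Open Scope R_scope.

(* With h(y) = -log(1-y) - y = sum_{k>=2} y^k/k, the n-th term z^(n-1) (1/n - log(1+1/n))
   of gamma(z) equals z^(n-1) h(-1/n), and also z^(n-1) (1/n - 1/(n+1)) - z^(n-1) h(1/(n+1)).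
   Apart from h(-1), all arguments of h here lie in [-1/2, 1/2], where the tail of its
   expansion after y^k is O(2^-k y^2); so sum_n z^(n-1) h(+-1/(n+1)) can be expanded and
   summed over n first, and as sum_n z^(n+1) / (n+1)^k = Li_k(z) - z this gives
   z^2 sum_n z^(n-1) h(+-1/(n+1)) = sum_k (+-1)^k (Li_k(z) - z) / k.
   The remaining pieces, h(-1) = 1 - log 2 = sum_k (-1)^k / k and
   z^2 sum_n z^(n-1) (1/n - 1/(n+1)) = z + (1 - z) log(1 - z), are instances of
   -log(1 - w) = sum_n w^n / n on the closed unit disc minus 1.  That expansion follows from
   the mean value theorem applied to the real and imaginary parts of
   t |-> log(1 - t w) + sum_(n<=N) (t w)^n / n, whose derivative is -t^N w^(N+1) / (1 - t w). *)

Lemma is_series_of_bound (a e : nat -> R) (l : R) :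
  is_lim_seq e 0 -> (forall N, Rabs (sum_n a N - l) <= e N) -> is_series a l.
Proof.
  intros He H. change (is_lim_seq (sum_n a) l).
  apply (is_lim_seq_le_le (fun N => l - e N) _ (fun N => l + e N)).
  - intros N. specialize (H N). apply Rabs_le_between in H. lra.
  - replace (Finite l) with (Rbar_minus l 0) by (simpl; f_equal; ring).
    apply is_lim_seq_minus'; [apply is_lim_seq_const | exact He].
  - replace (Finite l) with (Rbar_plus l 0) by (simpl; f_equal; ring).
    apply is_lim_seq_plus'; [apply is_lim_seq_const | exact He].
Qed.

Lemma is_lim_seq_div_INR (K : R) : is_lim_seq (fun N => K / INR (S (S N))) 0.
Proof.
  replace (Finite 0) with (Rbar_mult K (Rbar_inv p_infty)) by (simpl; f_equal; ring).
  apply is_lim_seq_scal_l, is_lim_seq_inv; [|discriminate].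
  apply (is_lim_seq_incr_1 (fun n => INR (S n))), (is_lim_seq_incr_1 INR).
  apply is_lim_seq_INR.
Qed.

Lemma INR_S_neq0 n : INR (S n) <> 0.
Proof. apply not_0_INR; lia. Qed.

Lemma INR_S_pos n : 0 < INR (S n).
Proof. apply lt_0_INR. lia. Qed.

Lemma pow_le_one (x : R) n : 0 <= x <= 1 -> x ^ n <= 1.
Proof. intros Hx. rewrite <- (pow1 n). apply pow_incr, Hx. Qed.

Lemma Rabs_pow_le_sq (y : R) (k : nat) : Rabs y <= 1 -> (2 <= k)%nat -> Rabs (y ^ k) <= y ^ 2.
Proof.
  intros Hy Hk. replace k with (2 + (k - 2))%nat by lia.
  rewrite pow_add, Rabs_mult, (Rabs_pos_eq (y ^ 2)), <- RPow_abs by apply pow2_ge_0.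
  rewrite <- (Rmult_1_r (y ^ 2)) at 2. apply Rmult_le_compat_l; [apply pow2_ge_0|].
  apply pow_le_one. split; [apply Rabs_pos | exact Hy].
Qed.

Lemma sum_n_succ_shift (a : nat -> R) M : sum_n a (S M) = a 0%nat + sum_n (fun m => a (S m)) M.
Proof.
  unfold sum_n. rewrite sum_Sn_m by lia. rewrite sum_n_m_S. reflexivity.
Qed.

Lemma is_derive_pow_div (n : nat) (t : R) :
  is_derive (fun t => t ^ S n / INR (S n)) t (t ^ n).
Proof.
  auto_derive; [easy|].
  change (match n with 0%nat => 1 | S _ => INR n + 1 end) with (INR (S n)).
  field. apply INR_S_neq0.
Qed.

Lemma is_derive_sum_pow_div (c : nat -> R) N t :
  is_derive (fun t => sum_n (fun j => c j * (t ^ S j / INR (S j))) N) t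
    (sum_n (fun j => c j * t ^ j) N).
Proof.
  induction N as [|N IH].
  - apply (is_derive_ext (fun t => c 0%nat * (t ^ 1 / INR 1))).
    { intros s. rewrite sum_O. reflexivity. }
    rewrite sum_O. apply (is_derive_scal (fun t => t ^ 1 / INR 1)), is_derive_pow_div.
  - apply (is_derive_ext (fun t => sum_n (fun j => c j * (t ^ S j / INR (S j))) N
                                  + c (S N) * (t ^ S (S N) / INR (S (S N))))).
    { intros s. rewrite sum_Sn. reflexivity. }
    rewrite sum_Sn. apply (is_derive_plus _ (fun t => c (S N) * (t ^ S (S N) / INR (S (S N))))).
    + exact IH.
    + apply (is_derive_scal (fun t => t ^ S (S N) / INR (S (S N)))), is_derive_pow_div.
Qed.

Lemma is_derive_nonneg_le (g dg : R -> R) :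
  (forall t, 0 <= t <= 1 -> is_derive g t (dg t)) ->
  (forall t, 0 <= t <= 1 -> 0 <= dg t) -> g 0 <= g 1.
Proof.
  intros Hd Hpos.
  destruct (MVT_gen g 0 1 dg) as [c [Hc Hmvt]];
    rewrite ?Rmin_left, ?Rmax_right in * by lra.
  - intros t Ht. apply Hd. lra.
  - intros t Ht. apply continuity_pt_filterlim, (ex_derive_continuous g).
    exists (dg t). apply Hd. lra.
  - specialize (Hpos c Hc). nra.
Qed.

(* Compare [f] with the primitives [± K t^(N+1)/(N+1)] of the bound. *)
Lemma mean_value_pow_bound (f df : R -> R) (K : R) (N : nat) :
  (forall t, 0 <= t <= 1 -> is_derive f t (df t)) ->
  (forall t, 0 <= t <= 1 -> Rabs (df t) <= K * t ^ N) ->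
  Rabs (f 1 - f 0) <= K / INR (S N).
Proof.
  intros Hd Hb.
  assert (Hside : forall s, s = 1 \/ s = -1 ->
            K * (0 ^ S N / INR (S N)) - s * f 0 <= K * (1 ^ S N / INR (S N)) - s * f 1).
  { intros s Hs.
    apply (is_derive_nonneg_le (fun t => K * (t ^ S N / INR (S N)) - s * f t)
             (fun t => K * t ^ N - s * df t)).
    - intros t Ht.
      apply (is_derive_minus (fun t => K * (t ^ S N / INR (S N))) (fun t => s * f t)).
      + apply (is_derive_scal (fun t => t ^ S N / INR (S N))), is_derive_pow_div.
      + apply (is_derive_scal f). apply Hd, Ht.
    - intros t Ht. specialize (Hb t Ht). apply Rabs_le_between in Hb.
      destruct Hs; subst s; lra. }
  rewrite pow1, pow_i in Hside by lia.
  assert (H1 := Hside 1 (or_introl eq_refl)). assert (H2 := Hside (-1) (or_intror eq_refl)).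
  unfold Rdiv in *. apply Rabs_le. lra.
Qed.

Lemma Re_sum_n (a : nat -> C) N :
  Re (sum_n (G := C_AbelianMonoid) a N) = sum_n (fun n => Re (a n)) N.
Proof.
  induction N as [|N IH]; rewrite ?sum_O; [reflexivity|].
  rewrite !sum_Sn, <- IH. apply re_plus.
Qed.

Lemma Im_sum_n (a : nat -> C) N :
  Im (sum_n (G := C_AbelianMonoid) a N) = sum_n (fun n => Im (a n)) N.
Proof.
  induction N as [|N IH]; rewrite ?sum_O; [reflexivity|].
  rewrite !sum_Sn, <- IH. apply im_plus.
Qed.

(* Balls of [C] are products of balls of [R]. *)
Lemma is_series_C_components (a : nat -> C) (l : C) :
  is_series (V := C_NormedModule) a l <->
  is_series (fun n => Re (a n)) (Re l) /\ is_series (fun n => Im (a n)) (Im l).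
Proof.
  split.
  - intros H. split; intros P [eps HP]; specialize (H _ (locally_ball l eps));
      unfold filtermap in *; revert H; apply filter_imp; intros n [Hre Him]; apply HP.
    + change (ball (Re l) eps (Re (sum_n (G := C_AbelianMonoid) a n))) in Hre.
      rewrite Re_sum_n in Hre. exact Hre.
    + change (ball (Im l) eps (Im (sum_n (G := C_AbelianMonoid) a n))) in Him.
      rewrite Im_sum_n in Him. exact Him.
  - intros [Hre Him] P [eps HP].
    specialize (Hre _ (locally_ball _ eps)). specialize (Him _ (locally_ball _ eps)).
    unfold filtermap in *. generalize (filter_and _ _ Hre Him). apply filter_imp.
    intros n [B1 B2]. apply HP. split.
    + change (ball (Re l) eps (Re (sum_n (G := C_AbelianMonoid) a n))).
      rewrite Re_sum_n. exact B1.
    + change (ball (Im l) eps (Im (sum_n (G := C_AbelianMonoid) a n))).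
      rewrite Im_sum_n. exact B2.
Qed.

Lemma is_series_C_ext (a b : nat -> C) (l : C) :
  (forall n, a n = b n) ->
  is_series (V := C_NormedModule) a l -> is_series (V := C_NormedModule) b l.
Proof. apply is_series_ext. Qed.

Lemma CSeries_unique (a : nat -> C) (l : C) :
  is_series (V := C_NormedModule) a l -> CSeries a = l.
Proof.
  intros H. apply is_series_C_components in H as [Hre Him].
  unfold CSeries. rewrite (is_series_unique _ _ Hre), (is_series_unique _ _ Him).
  destruct l; reflexivity.
Qed.

Lemma is_series_C_unique (a : nat -> C) (l l' : C) :
  is_series (V := C_NormedModule) a l -> is_series (V := C_NormedModule) a l' -> l = l'.
Proof. intros H H'. rewrite <- (CSeries_unique _ _ H). exact (CSeries_unique _ _ H'). Qed.

Lemma Re_CSeries (a : nat -> C) : Re (CSeries a) = Series (fun n => Re (a n)).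
Proof. reflexivity. Qed.

Lemma Im_CSeries (a : nat -> C) : Im (CSeries a) = Series (fun n => Im (a n)).
Proof. reflexivity. Qed.

Lemma CSeries_ext (a b : nat -> C) : (forall n, a n = b n) -> CSeries a = CSeries b.
Proof.
  intros E. unfold CSeries.
  rewrite (Series_ext _ (fun n => Re (b n))), (Series_ext (fun n => Im (a n)) (fun n => Im (b n)));
    [reflexivity | intros n; rewrite E; reflexivity ..].
Qed.

Lemma CSeries_scal_RtoC (r : R) (a : nat -> C) :
  CSeries (fun n => Cmult (RtoC r) (a n)) = Cmult (RtoC r) (CSeries a).
Proof.
  unfold CSeries.
  rewrite (Series_ext _ (fun n => r * Re (a n))) by (intros n; apply re_scal_l).
  rewrite (Series_ext (fun n => Im _) (fun n => r * Im (a n))) by (intros n; apply im_scal_l).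
  rewrite !Series_scal_l. unfold Cmult, RtoC; simpl. f_equal; ring.
Qed.

Lemma im_le_Cmod (c : C) : Rabs (Im c) <= Cmod c.
Proof.
  destruct c as [a b]. unfold Cmod, Im; simpl. rewrite <- sqrt_Rsqr_abs.
  apply sqrt_le_1_alt. unfold Rsqr. nra.
Qed.

Lemma is_series_CSeries_le (a : nat -> C) (b : nat -> R) :
  (forall n, Cmod (a n) <= b n) -> ex_series b -> is_series (V := C_NormedModule) a (CSeries a).
Proof.
  intros Hab Hb. apply is_series_C_components. split; apply Series_correct;
    apply (ex_series_le (K := R_AbsRing) (V := R_CompleteNormedModule) _ b); auto;
    intros n; eapply Rle_trans, Hab; [apply re_le_Cmod | apply im_le_Cmod].
Qed.

Lemma Cmod_pow_n (w : C) n : Cmod (pow_n w n) = Cmod w ^ n.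
Proof.
  induction n as [|n IH]; [apply Cmod_1|].
  change (pow_n w (S n)) with (Cmult w (pow_n w n)). rewrite Cmod_mult, IH. reflexivity.
Qed.

Lemma Cmod_pow_n_le_one (z : C) i : Cmod z <= 1 -> Cmod (pow_n z i) <= 1.
Proof. intros hz. rewrite Cmod_pow_n. apply pow_le_one. split; [apply Cmod_ge_0 | exact hz]. Qed.

Lemma Cmod_pow_n_scal_le (z : C) (c : R) i : Cmod z <= 1 ->
  Cmod (Cmult (pow_n z i) (RtoC c)) <= Rabs c.
Proof.
  intros hz. rewrite Cmod_mult, Cmod_R. rewrite <- (Rmult_1_l (Rabs c)) at 2.
  apply Rmult_le_compat_r; [apply Rabs_pos | apply Cmod_pow_n_le_one, hz].
Qed.

Lemma pow_n_RtoC (y : R) n : pow_n (RtoC y) n = RtoC (y ^ n).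
Proof.
  induction n as [|n IH]; [reflexivity|].
  change (pow_n (RtoC y) (S n)) with (Cmult (RtoC y) (pow_n (RtoC y) n)).
  rewrite IH, <- RtoC_mult. reflexivity.
Qed.

Lemma Cdiv_RtoC (u : C) (r : R) : r <> 0 -> Cdiv u (RtoC r) = Cmult u (RtoC (/ r)).
Proof. intros Hr. unfold Cdiv. rewrite RtoC_inv by exact Hr. reflexivity. Qed.

Lemma Clog_RtoC (r : R) : 0 < r -> Clog (RtoC r) = RtoC (ln r).
Proof.
  intros Hr. unfold Clog, Arg. rewrite Cmod_R, Rabs_pos_eq by lra. simpl.
  destruct (Rlt_dec 0 r) as [_|]; [|lra].
  rewrite Rdiv_0_l, atan_0. reflexivity.
Qed.

Lemma Re_lt_one (w : C) : Cmod w <= 1 -> w <> RtoC 1 -> Re w < 1.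
Proof.
  intros Hw Hne. destruct (Rlt_dec (Re w) 1) as [H|H]; [exact H|]. exfalso. apply Hne.
  assert (H2 := Cmod2_alt w). assert (H0 := Cmod_ge_0 w).
  destruct w as [a b]. unfold Re, Im, RtoC in *; simpl in *.
  assert (b = 0) by nra. assert (a = 1) by nra. subst. reflexivity.
Qed.

(** * The logarithmic series on the closed unit disc *)

(* [geom_rem w 0 t] is the derivative of [log (1 - t w)]; [t ^ n * geom_rem w n t] is what
   remains of it after subtracting the first [n] terms of its power series. *)
Definition geom_rem (w : C) (n : nat) (t : R) : C :=
  Cdiv (Copp (pow_n w (S n))) (Cminus 1 (Cmult (RtoC t) w)).

Lemma Re_one_minus_scal (w : C) t : Re (Cminus 1 (Cmult (RtoC t) w)) = 1 - t * Re w.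
Proof. destruct w as [a b]. unfold Re; simpl. ring. Qed.

Lemma one_minus_scal_neq0 (w : C) t : 1 - t * Re w <> 0 -> Cminus 1 (Cmult (RtoC t) w) <> 0.
Proof. intros H E. apply H. rewrite <- Re_one_minus_scal, E. reflexivity. Qed.

Lemma geom_rem_succ (w : C) n t : 1 - t * Re w <> 0 ->
  Cplus (geom_rem w n t) (pow_n w (S n)) = Cmult (RtoC t) (geom_rem w (S n) t).
Proof.
  intros H. unfold geom_rem.
  change (pow_n w (S (S n))) with (Cmult w (pow_n w (S n))).
  field. apply one_minus_scal_neq0, H.
Qed.

Lemma one_minus_scal_pos (a t : R) : a < 1 -> 0 <= t <= 1 -> 0 < 1 - t * a.
Proof. intros Ha Ht. destruct (Rle_dec 0 a); nra. Qed.

Lemma Rmin_le_one_minus_scal (a t : R) : a < 1 -> 0 <= t <= 1 -> Rmin 1 (1 - a) <= 1 - t * a.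
Proof.
  intros Ha Ht. assert (H1 := Rmin_l 1 (1 - a)). assert (H2 := Rmin_r 1 (1 - a)). nra.
Qed.

Lemma Rmin_one_minus_pos (a : R) : a < 1 -> 0 < Rmin 1 (1 - a).
Proof. intros Ha. apply Rmin_glb_lt; lra. Qed.

Lemma Cmod_geom_rem_le (w : C) n t : Re w < 1 -> 0 <= t <= 1 ->
  Cmod (geom_rem w n t) <= Cmod w ^ S n / Rmin 1 (1 - Re w).
Proof.
  intros Hw Ht.
  assert (Hm := Rmin_le_one_minus_scal _ _ Hw Ht). assert (Hm0 := Rmin_one_minus_pos _ Hw).
  unfold geom_rem. rewrite Cmod_div by (apply one_minus_scal_neq0; lra).
  rewrite Cmod_opp, Cmod_pow_n. unfold Rdiv.
  apply Rmult_le_compat_l; [apply pow_le, Cmod_ge_0|].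
  apply Rinv_le_contravar; [exact Hm0|].
  eapply Rle_trans; [|apply re_le_Cmod]. rewrite Re_one_minus_scal.
  eapply Rle_trans; [exact Hm | apply Rle_abs].
Qed.

Section LinearFunctional.

Variable phi : C -> R.
Hypothesis phi_plus : forall a b, phi (Cplus a b) = phi a + phi b.
Hypothesis phi_scal : forall (r : R) a, phi (Cmult (RtoC r) a) = r * phi a.
Hypothesis phi_le_Cmod : forall a, Rabs (phi a) <= Cmod a.

Lemma phi_geom_rem_sum (w : C) t N : 1 - t * Re w <> 0 ->
  phi (geom_rem w 0 t) + sum_n (fun j => phi (pow_n w (S j)) * t ^ j) N
  = t ^ S N * phi (geom_rem w (S N) t).
Proof.
  intros H. induction N as [|N IH].
  - rewrite sum_O, pow_1, <- phi_scal, <- geom_rem_succ, phi_plus by exact H.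
    simpl. ring.
  - rewrite sum_Sn. change (plus ?u ?v) with (u + v). rewrite <- Rplus_assoc, IH.
    replace (t ^ S (S N) * phi (geom_rem w (S (S N)) t))
      with (t ^ S N * phi (Cmult (RtoC t) (geom_rem w (S (S N)) t)))
      by (rewrite phi_scal; simpl; ring).
    rewrite <- geom_rem_succ, phi_plus by exact H. ring.
Qed.

(* [g] plays the role of the component [phi] of [t |-> log (1 - t w)]. *)
Lemma phi_log_taylor_bound (w : C) (g : R -> R) N : Re w < 1 -> g 0 = 0 ->
  (forall t, 0 <= t <= 1 -> is_derive g t (phi (geom_rem w 0 t))) ->
  Rabs (g 1 + sum_n (fun j => phi (pow_n w (S j)) / INR (S j)) N)
  <= Cmod w ^ S (S N) / Rmin 1 (1 - Re w) / INR (S (S N)).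
Proof.
  intros Hw Hg0 Hg.
  set (f t := g t + sum_n (fun j => phi (pow_n w (S j)) * (t ^ S j / INR (S j))) N).
  assert (Hf : f 1 - f 0 = g 1 + sum_n (fun j => phi (pow_n w (S j)) / INR (S j)) N).
  { unfold f. rewrite Hg0.
    rewrite (sum_n_ext (fun j => phi (pow_n w (S j)) * (0 ^ S j / INR (S j))) (fun _ => 0))
      by (intros j; rewrite pow_i by lia; unfold Rdiv; rewrite Rmult_0_l, Rmult_0_r; reflexivity).
    rewrite (sum_n_ext (fun j => _ * (1 ^ S j / _)) (fun j => phi (pow_n w (S j)) / INR (S j)))
      by (intros j; rewrite pow1; unfold Rdiv; rewrite Rmult_1_l; reflexivity).
    unfold sum_n at 2. rewrite sum_n_m_const. ring. }
  rewrite <- Hf.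
  apply (mean_value_pow_bound f (fun t => t ^ S N * phi (geom_rem w (S N) t))).
  - intros t Ht.
    rewrite <- phi_geom_rem_sum by (apply Rgt_not_eq, one_minus_scal_pos; assumption).
    apply (is_derive_plus g
             (fun t => sum_n (fun j => phi (pow_n w (S j)) * (t ^ S j / INR (S j))) N)).
    + apply Hg, Ht.
    + apply is_derive_sum_pow_div.
  - intros t Ht. rewrite Rabs_mult, Rabs_pos_eq, Rmult_comm by (apply pow_le; lra).
    apply Rmult_le_compat_r; [apply pow_le; lra|].
    eapply Rle_trans; [apply phi_le_Cmod | apply Cmod_geom_rem_le; assumption].
Qed.

End LinearFunctional.

Lemma is_derive_ln_Cmod_one_minus (w : C) t : 1 - t * Re w <> 0 ->
  is_derive (fun t => ln (Cmod (Cminus 1 (Cmult (RtoC t) w)))) t (Re (geom_rem w 0 t)).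
Proof.
  intros H. destruct w as [a b]. unfold Re in *; simpl in H.
  apply (is_derive_ext (fun t => ln (sqrt ((1 - t * a) ^ 2 + (t * b) ^ 2)))).
  { intros s. unfold Cmod. simpl. do 3 f_equal; ring. }
  assert (D : 0 < (1 - t * a) ^ 2 + (t * b) ^ 2)
    by (assert (0 < (1 - t * a) ^ 2) by (apply pow2_gt_0; exact H); nra).
  auto_derive.
  - split; [|split; [|exact I]]; [|apply sqrt_lt_R0]; simpl in D; lra.
  - set (X := (1 + - (t * a)) * ((1 + - (t * a)) * 1) + t * b * (t * b * 1)).
    assert (HX : 0 < X) by (unfold X; simpl in D; lra).
    rewrite Rmult_assoc, <- Rinv_mult, (Rmult_assoc 2), sqrt_sqrt by lra.
    unfold geom_rem, X; simpl. field. simpl in D. lra.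
Qed.

Lemma is_derive_atan_slope (w : C) t : 1 - t * Re w <> 0 ->
  is_derive (fun t => atan (- (t * Im w) / (1 - t * Re w))) t (Im (geom_rem w 0 t)).
Proof.
  intros H.
  assert (Hq : is_derive (fun t => - (t * Im w) / (1 - t * Re w)) t (- Im w / (1 - t * Re w) ^ 2))
    by (auto_derive; [exact H | field; exact H]).
  assert (D : 0 < (1 - t * Re w) ^ 2 + (t * Im w) ^ 2)
    by (assert (0 < (1 - t * Re w) ^ 2) by (apply pow2_gt_0; exact H); nra).
  replace (Im (geom_rem w 0 t))
    with (scal (- Im w / (1 - t * Re w) ^ 2) (/ (1 + (- (t * Im w) / (1 - t * Re w))²))).
  - apply (is_derive_comp atan _ t _ _ (is_derive_atan _) Hq).
  - destruct w as [a b]. unfold scal, geom_rem, Rsqr, Re, Im in *; simpl in *.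
    unfold mult; simpl. field. lra.
Qed.

Lemma ln_Cmod_taylor_bound (w : C) N : Re w < 1 ->
  Rabs (ln (Cmod (Cminus 1 w)) + sum_n (fun j => Re (pow_n w (S j)) / INR (S j)) N)
  <= Cmod w ^ S (S N) / Rmin 1 (1 - Re w) / INR (S (S N)).
Proof.
  intros Hw. rewrite <- (Cmult_1_l w) at 1.
  apply (phi_log_taylor_bound Re re_plus re_scal_l re_le_Cmod w
           (fun t => ln (Cmod (Cminus 1 (Cmult (RtoC t) w))))); [exact Hw | |].
  - replace (Cminus 1 (Cmult (RtoC 0) w)) with (RtoC 1) by ring. rewrite Cmod_1. apply ln_1.
  - intros t Ht. apply is_derive_ln_Cmod_one_minus, Rgt_not_eq, one_minus_scal_pos; assumption.
Qed.

Lemma Arg_taylor_bound (w : C) N : Re w < 1 ->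
  Rabs (Arg (Cminus 1 w) + sum_n (fun j => Im (pow_n w (S j)) / INR (S j)) N)
  <= Cmod w ^ S (S N) / Rmin 1 (1 - Re w) / INR (S (S N)).
Proof.
  intros Hw.
  (* On [0, 1] we have [Re (1 - t w) > 0], where [Arg] is this arctangent. *)
  replace (Arg (Cminus 1 w)) with (atan (- (1 * Im w) / (1 - 1 * Re w))).
  - apply (phi_log_taylor_bound Im im_plus im_scal_l im_le_Cmod w
             (fun t => atan (- (t * Im w) / (1 - t * Re w)))); [exact Hw | |].
    + rewrite Rmult_0_l, Ropp_0, Rdiv_0_l. apply atan_0.
    + intros t Ht. apply is_derive_atan_slope, Rgt_not_eq, one_minus_scal_pos; assumption.
  - destruct w as [a b]. unfold Arg, Re, Im in *; simpl in *.
    destruct (Rlt_dec 0 (1 + - a)) as [_|Hn]; [|lra].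
    f_equal. field. lra.
Qed.

Lemma taylor_bound_le_div_INR (w : C) N : Re w < 1 -> Cmod w <= 1 ->
  Cmod w ^ S (S N) / Rmin 1 (1 - Re w) / INR (S (S N)) <= / Rmin 1 (1 - Re w) / INR (S (S N)).
Proof.
  intros Hw Hw1. assert (Hm := Rmin_one_minus_pos _ Hw).
  unfold Rdiv. apply Rmult_le_compat_r; [left; apply Rinv_0_lt_compat, lt_0_INR; lia|].
  rewrite <- (Rmult_1_l (/ Rmin 1 (1 - Re w))) at 2.
  apply Rmult_le_compat_r; [left; apply Rinv_0_lt_compat, Hm|].
  apply pow_le_one. split; [apply Cmod_ge_0 | exact Hw1].
Qed.

Lemma is_series_log_one_minus (w : C) : Re w < 1 -> Cmod w <= 1 ->
  is_series (V := C_NormedModule) (fun j => Cdiv (pow_n w (S j)) (RtoC (INR (S j))))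
    (Copp (Clog (Cminus 1 w))).
Proof.
  intros Hw Hw1. apply is_series_C_components.
  split; apply (is_series_of_bound _ (fun N => / Rmin 1 (1 - Re w) / INR (S (S N))));
    try apply is_lim_seq_div_INR; intros N; eapply Rle_trans, taylor_bound_le_div_INR, Hw1;
    try exact Hw.
  - rewrite (sum_n_ext _ (fun j => Re (pow_n w (S j)) / INR (S j)))
      by (intros j; rewrite Cdiv_RtoC, re_scal_r by apply INR_S_neq0; reflexivity).
    replace (_ - _)
      with (ln (Cmod (Cminus 1 w)) + sum_n (fun j => Re (pow_n w (S j)) / INR (S j)) N)
      by (unfold Clog; simpl; ring).
    apply ln_Cmod_taylor_bound, Hw.
  - rewrite (sum_n_ext _ (fun j => Im (pow_n w (S j)) / INR (S j)))
      by (intros j; rewrite Cdiv_RtoC, im_scal_r by apply INR_S_neq0; reflexivity).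
    replace (_ - _)
      with (Arg (Cminus 1 w) + sum_n (fun j => Im (pow_n w (S j)) / INR (S j)) N)
      by (unfold Clog; simpl; ring).
    apply Arg_taylor_bound, Hw.
Qed.

Lemma ln_taylor_bound (y : R) N : Rabs y <= 1 / 2 ->
  Rabs (ln (1 - y) + sum_n (fun j => y ^ S j / INR (S j)) N) <= 2 * Rabs y ^ S (S N).
Proof.
  intros Hy. assert (Hy' : Re (RtoC y) < 1) by (simpl; apply Rabs_le_between in Hy; lra).
  assert (B := ln_Cmod_taylor_bound (RtoC y) N Hy').
  rewrite <- RtoC_minus, !Cmod_R, (Rabs_pos_eq (1 - y)) in B by (apply Rabs_le_between in Hy; lra).
  rewrite (sum_n_ext _ (fun j => y ^ S j / INR (S j))) in B
    by (intros j; rewrite pow_n_RtoC; reflexivity).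
  eapply Rle_trans; [exact B|]. simpl Re.
  assert (Hm : 1 / 2 <= Rmin 1 (1 - y)) by (apply Rmin_glb; apply Rabs_le_between in Hy; lra).
  assert (HN : 1 <= INR (S (S N))) by (apply (le_INR 1); lia).
  assert (Hp : 0 <= Rabs y ^ S (S N)) by (apply pow_le, Rabs_pos).
  unfold Rdiv. rewrite Rmult_assoc, Rmult_comm.
  apply Rmult_le_compat_r; [exact Hp|].
  apply Rle_trans with (/ (1 / 2) * / 1); [|lra].
  apply Rmult_le_compat; try (left; apply Rinv_0_lt_compat; lra); apply Rinv_le_contravar; lra.
Qed.

(** * Exchanging the sums over k and n *)

Definition log_rem (y : R) : R := - ln (1 - y) - y.

Definition log_rem_taylor (M : nat) (y : R) : R := sum_n (fun m => y ^ S (S m) / INR (S (S m))) M.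

Lemma Rabs_log_rem_taylor_sub (y : R) M : Rabs y <= 1 / 2 ->
  Rabs (log_rem_taylor M y - log_rem y) <= 2 * Rabs y ^ S (S (S M)).
Proof.
  intros Hy. assert (B := ln_taylor_bound y (S M) Hy).
  rewrite sum_n_succ_shift in B.
  unfold log_rem_taylor, log_rem. replace (_ - _) with (ln (1 - y) + (y ^ 1 / INR 1 +
    sum_n (fun m => y ^ S (S m) / INR (S (S m))) M)); [exact B|].
  simpl. field.
Qed.

Lemma Rabs_pow_le_half (y : R) n : Rabs y <= 1 / 2 -> Rabs y ^ S (S (S n)) <= (1 / 2) ^ S n * y ^ 2.
Proof.
  intros Hy. replace (S (S (S n))) with (S n + 2)%nat by lia.
  rewrite pow_add, pow2_abs.
  apply Rmult_le_compat_r; [apply pow2_ge_0|]. apply pow_incr. split; [apply Rabs_pos | exact Hy].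
Qed.

Lemma Rabs_log_rem_le (y : R) : Rabs y <= 1 / 2 -> Rabs (log_rem y) <= 2 * y ^ 2.
Proof.
  intros Hy. assert (B := Rabs_log_rem_taylor_sub y 0 Hy).
  assert (Hp := Rabs_pow_le_half y 0 Hy).
  unfold log_rem_taylor in B. rewrite sum_O in B.
  apply Rabs_le_between in B. apply Rabs_le.
  assert (0 <= y ^ 2) by apply pow2_ge_0. simpl in *. lra.
Qed.

Lemma Rabs_log_rem_taylor_le (y : R) M : Rabs y <= 1 / 2 -> Rabs (log_rem_taylor M y) <= 4 * y ^ 2.
Proof.
  intros Hy. assert (B := Rabs_log_rem_taylor_sub y M Hy).
  assert (Hh := Rabs_log_rem_le y Hy). assert (Hp := Rabs_pow_le_half y M Hy).
  assert (Hh2 : (1 / 2) ^ S M <= 1) by (apply pow_le_one; lra).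
  assert (0 <= y ^ 2) by apply pow2_ge_0.
  apply Rabs_le_between in B, Hh. apply Rabs_le. nra.
Qed.

Section LogRemSwap.

Variables y p : nat -> R.
Hypothesis hy : forall i, Rabs (y i) <= 1 / 2.
Hypothesis hy2 : ex_series (fun i => y i ^ 2).
Hypothesis hp : forall i, Rabs (p i) <= 1.

Lemma ex_series_dominated (c : nat -> R) K :
  (forall i, Rabs (c i) <= K * y i ^ 2) -> ex_series (fun i => p i * c i).
Proof.
  intros Hc.
  apply (ex_series_le (K := R_AbsRing) (V := R_CompleteNormedModule) _ (fun i => K * y i ^ 2)).
  - intros i. change (norm (p i * c i)) with (Rabs (p i * c i)). rewrite Rabs_mult.
    rewrite <- (Rmult_1_l (K * y i ^ 2)).
    apply Rmult_le_compat; [apply Rabs_pos | apply Rabs_pos | apply hp | apply Hc].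
  - apply (ex_series_scal_l (V := R_NormedModule) K), hy2.
Qed.

Lemma ex_series_pow (k : nat) : (2 <= k)%nat -> ex_series (fun i => p i * y i ^ k).
Proof.
  intros Hk. apply (ex_series_dominated _ 1). intros i. rewrite Rmult_1_l.
  apply Rabs_pow_le_sq; [|exact Hk]. specialize (hy i). lra.
Qed.

Lemma Series_log_rem_taylor M :
  sum_n (fun m => Series (fun i => p i * y i ^ S (S m)) / INR (S (S m))) M
  = Series (fun i => p i * log_rem_taylor M (y i)).
Proof.
  induction M as [|M IH].
  - rewrite sum_O. unfold Rdiv. rewrite <- Series_scal_r. apply Series_ext.
    intros i. unfold log_rem_taylor. rewrite sum_O. unfold Rdiv. ring.
  - rewrite sum_Sn, IH. change (plus ?u ?v) with (u + v).
    unfold Rdiv. rewrite <- Series_scal_r, <- Series_plus.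
    + apply Series_ext. intros i. unfold log_rem_taylor. rewrite sum_Sn.
      change (plus ?u ?v) with (u + v). unfold Rdiv. ring.
    + apply (ex_series_dominated _ 4). intros i. apply Rabs_log_rem_taylor_le, hy.
    + apply ex_series_scal_r, ex_series_pow. lia.
Qed.

Lemma is_series_log_rem_swap :
  is_series (fun m => Series (fun i => p i * y i ^ S (S m)) / INR (S (S m)))
    (Series (fun i => p i * log_rem (y i))).
Proof.
  set (Y := Series (fun i => y i ^ 2)).
  apply (is_series_of_bound _ (fun M => 2 * (1 / 2) ^ S M * Y)).
  - replace (Finite 0) with (Rbar_mult 0 Y) by (simpl; f_equal; ring).
    apply is_lim_seq_scal_r.
    replace (Finite 0) with (Rbar_mult 2 0) by (simpl; f_equal; ring).
    apply is_lim_seq_scal_l, (is_lim_seq_incr_1 (fun M => (1 / 2) ^ M)), is_lim_seq_geom.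
    rewrite Rabs_pos_eq; lra.
  - intros M.
    assert (Hd : forall i, 0 <= Rabs (p i * log_rem_taylor M (y i) - p i * log_rem (y i))
                           <= 2 * (1 / 2) ^ S M * y i ^ 2).
    { intros i. split; [apply Rabs_pos|].
      rewrite <- Rmult_minus_distr_l, Rabs_mult, <- (Rmult_1_l (2 * _ * _)).
      apply Rmult_le_compat; [apply Rabs_pos | apply Rabs_pos | apply hp|].
      eapply Rle_trans; [apply Rabs_log_rem_taylor_sub, hy|].
      assert (H := Rabs_pow_le_half _ M (hy i)). lra. }
    assert (Hb : ex_series (fun i => 2 * (1 / 2) ^ S M * y i ^ 2))
      by apply (ex_series_scal_l (V := R_NormedModule) (2 * (1 / 2) ^ S M)), hy2.
    rewrite Series_log_rem_taylor, <- Series_minus.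
    + eapply Rle_trans; [apply Series_Rabs|].
      * refine (ex_series_le (K := R_AbsRing) (V := R_CompleteNormedModule) _ _ _ Hb).
        intros i. change (norm ?u) with (Rabs u). rewrite Rabs_Rabsolu. apply Hd.
      * eapply Rle_trans; [apply (Series_le _ _ Hd Hb)|].
        rewrite Series_scal_l. right. reflexivity.
    + apply (ex_series_dominated _ 4). intros i. apply Rabs_log_rem_taylor_le, hy.
    + apply (ex_series_dominated _ 2). intros i. apply Rabs_log_rem_le, hy.
Qed.

End LogRemSwap.

Lemma is_series_pow_n_log_rem_swap (z : C) (y : nat -> R) : Cmod z <= 1 ->
  (forall i, Rabs (y i) <= 1 / 2) -> ex_series (fun i => y i ^ 2) ->
  is_series (V := C_NormedModule)
    (fun m => Cdiv (CSeries (fun i => Cmult (pow_n z i) (RtoC (y i ^ S (S m)))))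
                   (RtoC (INR (S (S m)))))
    (CSeries (fun i => Cmult (pow_n z i) (RtoC (log_rem (y i))))).
Proof.
  intros hz hy hy2. apply is_series_C_components. rewrite Re_CSeries, Im_CSeries.
  rewrite (Series_ext _ (fun i => Re (pow_n z i) * log_rem (y i))) by (intros; apply re_scal_r).
  rewrite (Series_ext (fun i => Im _) (fun i => Im (pow_n z i) * log_rem (y i)))
    by (intros; apply im_scal_r).
  split; eapply is_series_ext.
  2: apply (is_series_log_rem_swap y (fun i => Re (pow_n z i)) hy hy2);
       intros i; eapply Rle_trans; [apply re_le_Cmod | apply Cmod_pow_n_le_one, hz].
  3: apply (is_series_log_rem_swap y (fun i => Im (pow_n z i)) hy hy2);
       intros i; eapply Rle_trans; [apply im_le_Cmod | apply Cmod_pow_n_le_one, hz].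
  all: intros m; rewrite Cdiv_RtoC by apply INR_S_neq0.
  - rewrite re_scal_r, Re_CSeries. unfold Rdiv.
    apply Rmult_eq_compat_r, Series_ext. intros i. symmetry. apply re_scal_r.
  - rewrite im_scal_r, Im_CSeries. unfold Rdiv.
    apply Rmult_eq_compat_r, Series_ext. intros i. symmetry. apply im_scal_r.
Qed.

(** * The generalized Euler constant function *)

Definition inv_succ2 (i : nat) : R := / INR (S (S i)).

Lemma inv_succ2_bounds (i : nat) : 0 < inv_succ2 i <= 1 / 2.
Proof.
  unfold inv_succ2. rewrite !S_INR. assert (H := pos_INR i). split.
  - apply Rinv_0_lt_compat. lra.
  - replace (1 / 2) with (/ 2) by field. apply Rinv_le_contravar; lra.
Qed.

Lemma is_series_telescoping_inv :
  is_series (fun i => / INR (S i) - / INR (S (S i))) 1.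
Proof.
  apply (is_series_of_bound _ (fun N => 1 / INR (S (S N)))); [apply is_lim_seq_div_INR|].
  intros N.
  replace (sum_n (fun i => / INR (S i) - / INR (S (S i))) N) with (1 - / INR (S (S N))).
  - rewrite Rabs_left1; [unfold Rdiv; lra|].
    assert (0 < / INR (S (S N))) by apply Rinv_0_lt_compat, INR_S_pos. lra.
  - induction N as [|N IH].
    + rewrite sum_O. simpl. field.
    + rewrite sum_Sn, <- IH. change (plus ?u ?v) with (u + v). ring.
Qed.

Lemma inv_succ2_sq_le (i : nat) : inv_succ2 i ^ 2 <= / INR (S i) - / INR (S (S i)).
Proof.
  unfold inv_succ2. rewrite (S_INR (S i)). assert (H := INR_S_pos i).
  replace (/ INR (S i) - / (INR (S i) + 1)) with (/ (INR (S i) * (INR (S i) + 1))) by (field; lra).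
  rewrite pow_inv. apply Rinv_le_contravar; nra.
Qed.

Lemma ex_series_inv_succ2_sq : ex_series (fun i => inv_succ2 i ^ 2).
Proof.
  apply (ex_series_le (K := R_AbsRing) (V := R_CompleteNormedModule) _
           (fun i => / INR (S i) - / INR (S (S i)))); [|eexists; apply is_series_telescoping_inv].
  intros i. change (norm ?u) with (Rabs u). rewrite Rabs_pos_eq by apply pow2_ge_0.
  apply inv_succ2_sq_le.
Qed.

Lemma Rabs_scal_inv_succ2_le (s : R) i : Rabs s <= 1 -> Rabs (s * inv_succ2 i) <= 1 / 2.
Proof.
  intros hs. assert (Hx := inv_succ2_bounds i). assert (Hs := Rabs_pos s).
  rewrite Rabs_mult, (Rabs_pos_eq (inv_succ2 i)) by lra. nra.
Qed.

Lemma ex_series_scal_inv_succ2_sq (s : R) : ex_series (fun i => (s * inv_succ2 i) ^ 2).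
Proof.
  eapply ex_series_ext;
    [|apply (ex_series_scal_l (V := R_NormedModule) (s ^ 2)), ex_series_inv_succ2_sq].
  intros i. change (scal ?u ?v) with (u * v). rewrite Rpow_mult_distr. reflexivity.
Qed.

Lemma is_series_alt_harmonic_tail :
  is_series (V := C_NormedModule) (fun m => RtoC ((-1) ^ (m + 2) / INR (m + 2))) (RtoC (1 - ln 2)).
Proof.
  assert (HL : is_series (V := C_NormedModule)
                 (fun j => Cdiv (pow_n (RtoC (-1)) (S j)) (RtoC (INR (S j))))
                 (Copp (Clog (Cminus 1 (RtoC (-1))))))
    by (apply is_series_log_one_minus; [simpl; lra | rewrite Cmod_R, Rabs_m1; lra]).
  replace (Cminus 1 (RtoC (-1))) with (RtoC 2) in HL by (rewrite <- RtoC_minus; f_equal; ring).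
  rewrite Clog_RtoC in HL by lra.
  eapply is_series_C_ext;
    [|apply (is_series_incr_1 (fun j => Cdiv (pow_n (RtoC (-1)) (S j)) (RtoC (INR (S j)))))].
  - intros m. cbv beta. rewrite pow_n_RtoC, Cdiv_RtoC, <- RtoC_mult by apply INR_S_neq0.
    replace (m + 2)%nat with (S (S m)) by lia. reflexivity.
  - replace (plus _ _) with (Copp (RtoC (ln 2))); [exact HL|].
    change (plus ?u ?v) with (Cplus u v). rewrite pow_n_RtoC, Cdiv_RtoC by apply INR_S_neq0.
    simpl. rewrite <- !RtoC_mult, <- RtoC_plus, <- RtoC_opp. f_equal. field.
Qed.

Section UnitDisc.

Variable z : C.
Hypothesis hz : Cmod z <= 1.

Lemma Li_split_head k : (2 <= k)%nat ->
  Li k z =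
  Cplus z (Cmult (Cmult z z) (CSeries (fun i => Cmult (pow_n z i) (RtoC (inv_succ2 i ^ k))))).
Proof.
  intros Hk. unfold Li. apply CSeries_unique, is_series_decr_1.
  set (A := CSeries (fun i => Cmult (pow_n z i) (RtoC (inv_succ2 i ^ k)))).
  replace (plus _ _) with (Cmult (Cmult z z) A).
  2: { change (plus ?u (opp ?v)) with (Cminus u v). change (pow_n z 1) with (Cmult z 1).
       change (INR 1) with 1. rewrite pow1, Cdiv_RtoC, Rinv_1 by exact R1_neq_R0. ring. }
  eapply is_series_C_ext;
    [|apply (is_series_scal_l (V := C_NormedModule) (Cmult z z)),
        (is_series_CSeries_le _ (fun i => inv_succ2 i ^ 2)), ex_series_inv_succ2_sq].
  - intros i. change (scal ?u ?v) with (Cmult u v). unfold inv_succ2.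
    rewrite pow_inv, RtoC_inv by (apply pow_nonzero, INR_S_neq0).
    change (pow_n z (S (S i))) with (Cmult z (Cmult z (pow_n z i))).
    field. intros E. apply RtoC_inj in E. revert E. apply pow_nonzero, INR_S_neq0.
  - intros i. eapply Rle_trans; [apply Cmod_pow_n_scal_le, hz|].
    apply Rabs_pow_le_sq; [|exact Hk].
    assert (Hx := inv_succ2_bounds i). rewrite Rabs_pos_eq; lra.
Qed.

Lemma is_series_Li_sub (s : R) : Rabs s <= 1 ->
  is_series (V := C_NormedModule)
    (fun m => Cmult (RtoC (s ^ (m + 2))) (Cdiv (Cminus (Li (m + 2) z) z) (RtoC (INR (m + 2)))))
    (Cmult (Cmult z z) (CSeries (fun i => Cmult (pow_n z i) (RtoC (log_rem (s * inv_succ2 i)))))).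
Proof.
  intros hs.
  eapply is_series_C_ext;
    [|apply (is_series_scal_l (V := C_NormedModule) (Cmult z z)), is_series_pow_n_log_rem_swap;
      [exact hz | intros i; apply Rabs_scal_inv_succ2_le, hs | apply ex_series_scal_inv_succ2_sq]].
  intros m. change (scal ?u ?v) with (Cmult u v). replace (m + 2)%nat with (S (S m)) by lia.
  rewrite Li_split_head by lia.
  rewrite (CSeries_ext _ (fun i => Cmult (RtoC (s ^ S (S m)))
                                   (Cmult (pow_n z i) (RtoC (inv_succ2 i ^ S (S m))))))
    by (intros i; rewrite Rpow_mult_distr, RtoC_mult; ring).
  rewrite CSeries_scal_RtoC, !Cdiv_RtoC by apply INR_S_neq0. ring.
Qed.

Lemma gamma_term_eq m : gamma_term z m =
  Cmult (pow_n z m) (RtoC (/ INR (S m) - ln (INR (S (S m)) / INR (S m)))).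
Proof.
  unfold gamma_term. rewrite Clog_RtoC by (apply Rdiv_lt_0_compat; apply INR_S_pos).
  rewrite RtoC_minus. reflexivity.
Qed.

Lemma is_series_pow_n_log_rem (s : R) : Rabs s <= 1 ->
  is_series (V := C_NormedModule) (fun i => Cmult (pow_n z i) (RtoC (log_rem (s * inv_succ2 i))))
    (CSeries (fun i => Cmult (pow_n z i) (RtoC (log_rem (s * inv_succ2 i))))).
Proof.
  intros hs. apply (is_series_CSeries_le _ (fun i => 2 * (s * inv_succ2 i) ^ 2)).
  - intros i. eapply Rle_trans; [apply Cmod_pow_n_scal_le, hz|].
    apply Rabs_log_rem_le, Rabs_scal_inv_succ2_le, hs.
  - apply (ex_series_scal_l (V := R_NormedModule) 2), ex_series_scal_inv_succ2_sq.
Qed.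

Lemma is_series_pow_n_telescoping :
  is_series (V := C_NormedModule)
    (fun i => Cmult (pow_n z i) (RtoC (/ INR (S i) - / INR (S (S i)))))
    (CSeries (fun i => Cmult (pow_n z i) (RtoC (/ INR (S i) - / INR (S (S i)))))).
Proof.
  apply (is_series_CSeries_le _ (fun i => / INR (S i) - / INR (S (S i))));
    [|eexists; apply is_series_telescoping_inv].
  intros i. eapply Rle_trans; [apply Cmod_pow_n_scal_le, hz|].
  apply Req_le, Rabs_pos_eq. eapply Rle_trans; [apply pow2_ge_0 | apply inv_succ2_sq_le].
Qed.

Lemma gammaC_log_rem : gammaC z =
  Cplus (RtoC (1 - ln 2))
    (Cmult z (CSeries (fun i => Cmult (pow_n z i) (RtoC (log_rem (-1 * inv_succ2 i)))))).
Proof.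
  unfold gammaC. apply CSeries_unique, is_series_decr_1.
  replace (plus _ _) with
    (Cmult z (CSeries (fun i => Cmult (pow_n z i) (RtoC (log_rem (-1 * inv_succ2 i)))))).
  2: { change (plus ?u (opp ?v)) with (Cminus u v). rewrite gamma_term_eq. simpl pow_n.
       replace (INR 2 / INR 1) with 2 by (simpl; field). simpl INR.
       change (@one C_Ring) with (RtoC 1). rewrite Rinv_1. ring. }
  eapply is_series_C_ext;
    [|apply (is_series_scal_l (V := C_NormedModule) z), is_series_pow_n_log_rem;
      rewrite Rabs_m1; lra].
  intros i. change (scal ?u ?v) with (Cmult u v). rewrite gamma_term_eq.
  change (pow_n z (S i)) with (Cmult z (pow_n z i)).
  replace (log_rem (-1 * inv_succ2 i))
    with (/ INR (S (S i)) - ln (INR (S (S (S i))) / INR (S (S i)))).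
  - ring.
  - unfold log_rem, inv_succ2. assert (H := INR_S_pos (S i)).
    replace (1 - -1 * / INR (S (S i))) with (INR (S (S (S i))) / INR (S (S i))).
    + ring.
    + rewrite (S_INR (S (S i))). field. lra.
Qed.

Lemma is_series_Li_alt :
  is_series (V := C_NormedModule)
    (fun m => Cmult (RtoC ((-1) ^ (m + 2))) (Cdiv (Li (m + 2) z) (RtoC (INR (m + 2)))))
    (Cmult z (gammaC z)).
Proof.
  rewrite gammaC_log_rem.
  set (H := CSeries (fun i => Cmult (pow_n z i) (RtoC (log_rem (-1 * inv_succ2 i))))).
  replace (Cmult z (Cplus (RtoC (1 - ln 2)) (Cmult z H)))
    with (Cplus (Cmult (Cmult z z) H) (Cmult z (RtoC (1 - ln 2)))) by ring.
  eapply is_series_C_ext;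
    [|apply (is_series_plus _ _ _ _ (is_series_Li_sub (-1) ltac:(rewrite Rabs_m1; lra))
               (is_series_scal_l (V := C_NormedModule) z _ _ is_series_alt_harmonic_tail))].
  intros m. change (plus ?u ?v) with (Cplus u v). change (scal ?u ?v) with (Cmult u v).
  cbv beta. replace (m + 2)%nat with (S (S m)) by lia.
  rewrite !Cdiv_RtoC by apply INR_S_neq0. unfold Rdiv. rewrite RtoC_mult. ring.
Qed.

Lemma Cmult_sq_CSeries_telescoping : Re z < 1 ->
  Cmult (Cmult z z) (CSeries (fun i => Cmult (pow_n z i) (RtoC (/ INR (S i) - / INR (S (S i))))))
  = Cplus z (Cmult (Cminus 1 z) (Clog (Cminus 1 z))).
Proof.
  intros Hw.
  set (a j := Cdiv (pow_n z (S j)) (RtoC (INR (S j)))).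
  assert (HL : is_series (V := C_NormedModule) a (Copp (Clog (Cminus 1 z))))
    by (apply is_series_log_one_minus; assumption).
  assert (HL1 : is_series (V := C_NormedModule) (fun j => a (S j))
                  (Cminus (Copp (Clog (Cminus 1 z))) z)).
  { apply is_series_incr_1. replace (plus _ _) with (Copp (Clog (Cminus 1 z))); [exact HL|].
    change (plus ?u ?v) with (Cplus u v). unfold a. rewrite Cdiv_RtoC by apply INR_S_neq0.
    change (pow_n z 1) with (Cmult z 1). simpl INR. rewrite Rinv_1. ring. }
  apply (is_series_C_unique (fun i => Cminus (Cmult z (a i)) (a (S i)))).
  - eapply is_series_C_ext;
      [|apply (is_series_scal_l (V := C_NormedModule) (Cmult z z)), is_series_pow_n_telescoping].
    intros i. change (scal ?u ?v) with (Cmult u v). unfold a.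
    rewrite !Cdiv_RtoC by apply INR_S_neq0. rewrite RtoC_minus.
    change (pow_n z (S (S i))) with (Cmult z (pow_n z (S i))).
    change (pow_n z (S i)) with (Cmult z (pow_n z i)). ring.
  - replace (Cplus z (Cmult (Cminus 1 z) (Clog (Cminus 1 z))))
      with (Cminus (Cmult z (Copp (Clog (Cminus 1 z)))) (Cminus (Copp (Clog (Cminus 1 z))) z))
      by ring.
    apply (is_series_minus _ _ _ _ (is_series_scal_l (V := C_NormedModule) z _ _ HL) HL1).
Qed.

Lemma gammaC_telescoping : gammaC z =
  Cminus (CSeries (fun i => Cmult (pow_n z i) (RtoC (/ INR (S i) - / INR (S (S i))))))
    (CSeries (fun i => Cmult (pow_n z i) (RtoC (log_rem (1 * inv_succ2 i))))).
Proof.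
  unfold gammaC. apply CSeries_unique.
  eapply is_series_C_ext;
    [|apply (is_series_minus _ _ _ _ is_series_pow_n_telescoping
               (is_series_pow_n_log_rem 1 ltac:(rewrite Rabs_R1; lra)))].
  intros i. change (plus ?u (opp ?v)) with (Cminus u v). rewrite gamma_term_eq.
  replace (/ INR (S i) - ln (INR (S (S i)) / INR (S i)))
    with ((/ INR (S i) - / INR (S (S i))) - log_rem (1 * inv_succ2 i)).
  - rewrite !RtoC_minus. ring.
  - unfold log_rem, inv_succ2. assert (H1 := INR_S_pos i). assert (H2 := INR_S_pos (S i)).
    replace (1 - 1 * / INR (S (S i))) with (/ (INR (S (S i)) / INR (S i))).
    + rewrite ln_Rinv by (apply Rdiv_lt_0_compat; lra). ring.
    + rewrite (S_INR (S i)). field. lra.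
Qed.

End UnitDisc.

(* Sums over k = 2,3,... are written with k = m + 2. *)
Theorem theorem3 (z : C) (hz : Cmod z <= 1) :
  (ex_series (V := C_NormedModule) (fun m : nat =>
      Cmult (RtoC ((-1) ^ (m + 2))) (Cdiv (Li (m + 2) z) (RtoC (INR (m + 2)))))
   /\ Cmult z (gammaC z) =
      CSeries (fun m : nat =>
      Cmult (RtoC ((-1) ^ (m + 2))) (Cdiv (Li (m + 2) z) (RtoC (INR (m + 2))))))
  /\
  (z <> RtoC 1 ->
   ex_series (V := C_NormedModule) (fun m : nat => Cdiv (Cminus (Li (m + 2) z) z) (RtoC (INR (m + 2))))
   /\ Cmult (Cmult z z) (gammaC z) =
      Cminus (Cplus z (Cmult (Cminus (RtoC 1) z) (Clog (Cminus (RtoC 1) z))))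
        (CSeries (fun m : nat => Cdiv (Cminus (Li (m + 2) z) z) (RtoC (INR (m + 2)))))).
Proof.
  split.
  - assert (H := is_series_Li_alt z hz).
    split; [eexists; exact H | symmetry; exact (CSeries_unique _ _ H)].
  - intros hz1.
    assert (H : is_series (V := C_NormedModule)
                  (fun m => Cdiv (Cminus (Li (m + 2) z) z) (RtoC (INR (m + 2))))
                  (Cmult (Cmult z z)
                     (CSeries (fun i => Cmult (pow_n z i) (RtoC (log_rem (1 * inv_succ2 i))))))).
    { eapply is_series_C_ext; [|apply (is_series_Li_sub z hz 1); rewrite Rabs_R1; lra].
      intros m. cbv beta. rewrite pow1. apply Cmult_1_l. }
    split; [eexists; exact H|].
    rewrite (CSeries_unique _ _ H), (gammaC_telescoping z hz).
    rewrite <- (Cmult_sq_CSeries_telescoping z hz (Re_lt_one z hz hz1)). ring.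
Qed.
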